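(* Let $T$ be a finite set of triples and $Q$ a finite nonempty set of queries. For each $q \in Q$ let $T_q \subseteq T$ be nonempty and $f_q(t) = \mathbb{I}[t\in T_q]$. Define $c_t = \sum_{q\in Q} f_q(t)$, $\mathrm{cost}(G,Q) = \sum_{t\in T} c_t$, the sensitivity $s(t) = \sum_{q\in Q}\frac{1}{|T_q|}\mathbb{I}[t\in T_q]$, $S = \sum_{t\in T} s(t)$, and the sampling probability $p(t) = s(t)/S$. Let $m\ge 1$, draw $m$ triples independently from $T$ according to $p$, let $X_t$ be the number of times $t$ is drawn, and let $w(t) = \frac{1}{m\,p(t)}$ for triples with $p(t)>0$. Define $\mathrm{cost}(C,Q) = \sum_{t \in T:\, X_t>0} X_t\, w(t)\, c_t$. Then \begin{enumerate} \item $\mathbb{E}[\mathrm{cost}(C,Q)] = \mathrm{cost}(G,Q)$; \item $\operatorname{Var}[\mathrm{cost}(C,Q)] \leq \frac{|Q|}{m}\,\mathrm{cost}(G,Q)^2$. \end{enumerate}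
   Context: $T$ is the triple set of a knowledge graph $G$, $Q$ a user-specific query workload, and $T_q$ the set of triples relevant to query $q$. Triples with $s(t)=0$ (equivalently $c_t = 0$) are never sampled. Thus $X_t \sim \mathrm{Binomial}(m,p(t))$. *)

From HB Require Import structures.
From mathcomp Require Import all_boot all_order all_algebra.
Set Implicit Arguments. Unset Strict Implicit. Unset Printing Implicit Defensive.
Import Order.TTheory GRing.Theory Num.Theory.
Local Open Scope ring_scope.

Section Coreset.
Variables (R : realFieldType) (T Q : finType) (Tq : Q -> {set T}) (m : nat).

Definition fq (q : Q) (t : T) : R := (t \in Tq q)%:R.
Definition cnt (t : T) : R := \sum_(q : Q) fq q t.
Definition costG : R := \sum_(t : T) cnt t.
Definition sens (t : T) : R := \sum_(q : Q) (#|Tq q|%:R)^-1 * fq q t.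
Definition Stot : R := \sum_(t : T) sens t.
Definition prob (t : T) : R := sens t / Stot.
Definition wgt (t : T) : R := (m%:R * prob t)^-1.

(* Sample space: m independent draws, an outcome is x : 'I_m -> T,
   with probability prod_i p(x_i). *)
Definition outcome := {ffun 'I_m -> T}.
Definition Pr (x : outcome) : R := \prod_(i < m) prob (x i).
Definition Xc (x : outcome) (t : T) : nat := #|[set i : 'I_m | x i == t]|.
Definition costC (x : outcome) : R :=
  \sum_(t : T | (0 < Xc x t)%N) (Xc x t)%:R * wgt t * cnt t.

Definition Expect (f : outcome -> R) : R := \sum_(x : outcome) Pr x * f x.
Definition Variance (f : outcome -> R) : R :=
  Expect (fun x => (f x - Expect f) ^+ 2).
End Coreset.

From HB Require Import structures.
From mathcomp Require Import all_boot all_order all_algebra.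
From mathcomp Require Import ring.
Set Implicit Arguments. Unset Strict Implicit. Unset Printing Implicit Defensive.
Import Order.TTheory GRing.Theory Num.Theory.
Local Open Scope ring_scope.

(* cost(C,Q) is a sum of m independent copies of w(X) c(X) with X ~ p.  The
   importance weight w = 1/(m p) makes each copy have mean cost(G,Q)/m, so the
   estimator is unbiased.  The variance of an i.i.d. sum is m times the
   variance of one copy, at most m E[(w c)^2] = sum_t S c_t^2 / (m s(t)).
   Every |T_q| is at most cost(G,Q), hence c_t <= cost(G,Q) s(t), and
   S = |Q| since each query distributes total sensitivity 1. *)

Lemma prod_if_eq (R : comPzSemiRingType) (I : finType) (i : I) (F : I -> R) :
  \prod_j (if j == i then F j else 1) = F i.
Proof. by rewrite -big_mkcond big_pred1_eq. Qed.

Lemma prod_if_eq2 (R : comPzSemiRingType) (I : finType) (i k : I) (F G : I -> R) :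
  i != k -> \prod_j (if j == i then F j else if j == k then G j else 1) = F i * G k.
Proof.
move=> ik; rewrite (bigD1 i) // (bigD1 k) 1?eq_sym //= !eqxx eq_sym (negbTE ik).
by rewrite big1 ?mulr1 // => j /andP[/negbTE-> /negbTE->].
Qed.

Lemma sum_draw_counts (R : pzSemiRingType) (T : finType) (m : nat)
    (x : {ffun 'I_m -> T}) (F : T -> R) :
  \sum_(t | (0 < Xc x t)%N) (Xc x t)%:R * F t = \sum_i F (x i).
Proof.
rewrite big_mkcond (partition_big x predT) //=; apply: eq_bigr => t _.
rewrite (eq_bigr (fun=> F t)) => [|i /eqP <-] //.
rewrite sumr_const mulr_natl /Xc cardsE.
by case: ifP => // /negbT; rewrite -eqn0Ngt => /eqP ->.
Qed.

Section IidDraws.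
Variables (R : comPzRingType) (T : finType) (p : T -> R) (m : nat).
Hypothesis sum_p1 : \sum_t p t = 1.

Local Notation mean g := (\sum_t p t * g t).

Lemma mean1 : mean (fun=> 1) = 1.
Proof. by under eq_bigr do rewrite mulr1. Qed.

Lemma expect_prod_draws (a : 'I_m -> T -> R) :
  \sum_(x : {ffun 'I_m -> T}) (\prod_j p (x j)) * \prod_j a j (x j)
  = \prod_j mean (a j).
Proof. by rewrite bigA_distr_bigA; apply: eq_bigr => x _; rewrite big_split. Qed.

Lemma expect_draw (i : 'I_m) (g : T -> R) :
  \sum_(x : {ffun 'I_m -> T}) (\prod_j p (x j)) * g (x i) = mean g.
Proof.
transitivity (\prod_j mean (fun t => if j == i then g t else 1)).
  rewrite -expect_prod_draws; apply: eq_bigr => x _.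
  by rewrite (prod_if_eq i (fun j => g (x j))).
rewrite -(prod_if_eq i (fun=> mean g)); apply: eq_bigr => j _.
by case: (j == i); rewrite ?mean1.
Qed.

Lemma expect_draw2 (i k : 'I_m) (g h : T -> R) : i != k ->
  \sum_(x : {ffun 'I_m -> T}) (\prod_j p (x j)) * (g (x i) * h (x k))
  = mean g * mean h.
Proof.
move=> ik.
transitivity (\prod_j mean (fun t => if j == i then g t else if j == k then h t else 1)).
  rewrite -expect_prod_draws; apply: eq_bigr => x _.
  by rewrite (prod_if_eq2 (fun j => g (x j)) (fun j => h (x j)) ik).
rewrite -(prod_if_eq2 (fun=> mean g) (fun=> mean h) ik); apply: eq_bigr => j _.
by case: (j == i); case: (j == k); rewrite ?mean1.
Qed.

Lemma expect_sum_draws (g : T -> R) :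
  \sum_(x : {ffun 'I_m -> T}) (\prod_j p (x j)) * \sum_i g (x i) = m%:R * mean g.
Proof.
under eq_bigr do rewrite mulr_sumr.
rewrite exchange_big /=; under eq_bigr do rewrite expect_draw.
by rewrite sumr_const card_ord mulr_natl.
Qed.

Lemma mean_centered_sqr (g : T -> R) :
  mean (fun t => (g t - mean g) ^+ 2) = mean (fun t => g t ^+ 2) - mean g ^+ 2.
Proof.
transitivity (mean (fun t => g t ^+ 2) - mean g *+ 2 * mean g + mean g ^+ 2 * \sum_t p t).
  rewrite !mulr_sumr -sumrB -big_split /=.
  by apply: eq_bigr => t _; ring.
by rewrite sum_p1; ring.
Qed.

Lemma variance_sum_draws (g : T -> R) :
  \sum_(x : {ffun 'I_m -> T}) (\prod_j p (x j)) * (\sum_i g (x i) - m%:R * mean g) ^+ 2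
  = m%:R * (mean (fun t => g t ^+ 2) - mean g ^+ 2).
Proof.
set mu := mean g; pose h t := g t - mu.
(* Centering makes the cross terms of the square vanish by independence. *)
have mean_h : mean h = 0.
  rewrite /h; under eq_bigr do rewrite mulrBr.
  by rewrite sumrB -mulr_suml sum_p1 mul1r subrr.
have expand_sqr (x : {ffun 'I_m -> T}) :
    (\prod_j p (x j)) * (\sum_i g (x i) - m%:R * mu) ^+ 2
    = \sum_i \sum_k (\prod_j p (x j)) * (h (x i) * h (x k)).
  have -> : \sum_i g (x i) - m%:R * mu = \sum_i h (x i).
    by rewrite sumrB sumr_const card_ord mulr_natl.
  rewrite expr2 big_distrlr mulr_sumr.
  by apply: eq_bigr => i _; rewrite mulr_sumr.
have cross i : \sum_k \sum_(x : {ffun 'I_m -> T}) (\prod_j p (x j)) * (h (x i) * h (x k))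
               = mean (fun t => h t ^+ 2).
  rewrite (bigD1 i) //= [X in _ + X]big1 => [|k ki]; last first.
    by rewrite expect_draw2 1?eq_sym // mean_h mul0r.
  rewrite addr0 -(expect_draw i (fun t => h t ^+ 2)).
  by apply: eq_bigr => x _; rewrite expr2.
under eq_bigr do rewrite expand_sqr.
rewrite exchange_big /=; under eq_bigr do rewrite exchange_big /= cross.
by rewrite sumr_const card_ord mulr_natl -mean_centered_sqr.
Qed.

End IidDraws.

Section CoresetSampling.
Variables (R : realFieldType) (T Q : finType) (Tq : Q -> {set T}) (m : nat).
Hypotheses (Q_gt0 : (0 < #|Q|)%N) (Tq_neq0 : forall q, Tq q != set0)
  (m_gt0 : (0 < m)%N).

Local Notation fq := (@fq R T Q Tq).
Local Notation cnt := (@cnt R T Q Tq).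
Local Notation costG := (@costG R T Q Tq).
Local Notation sens := (@sens R T Q Tq).
Local Notation Stot := (@Stot R T Q Tq).
Local Notation prob := (@prob R T Q Tq).
Local Notation wgt := (@wgt R T Q Tq m).
Local Notation costC := (@costC R T Q Tq m).
Local Notation Expect := (@Expect R T Q Tq m).
Local Notation Variance := (@Variance R T Q Tq m).

Lemma sum_fq q : \sum_t fq q t = #|Tq q|%:R.
Proof.
rewrite -sum1_card natr_sum [RHS]big_mkcond; apply: eq_bigr => t _.
by rewrite /fq; case: (t \in Tq q).
Qed.

Lemma Stot_card : Stot = #|Q|%:R.
Proof.
rewrite /Stot /sens exchange_big /= -sum1_card natr_sum; apply: eq_bigr => q _.
by rewrite -mulr_sumr sum_fq mulVf // pnatr_eq0 -lt0n card_gt0.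
Qed.

Lemma cnt_ge0 t : 0 <= cnt t.
Proof. exact: sumr_ge0. Qed.

Lemma card_Tq_le_costG q : #|Tq q|%:R <= costG.
Proof.
rewrite -sum_fq; apply: ler_sum => t _.
by rewrite /cnt (bigD1 q) //= lerDl sumr_ge0.
Qed.

Lemma cnt_le_costG_sens t : cnt t <= costG * sens t.
Proof.
rewrite /cnt /sens mulr_sumr; apply: ler_sum => q _.
rewrite mulrA -[X in X <= _]mul1r ler_wpM2r //.
by rewrite ler_pdivlMr ?mul1r ?card_Tq_le_costG // ltr0n card_gt0.
Qed.

Lemma sens_ge0 t : 0 <= sens t.
Proof. by apply: sumr_ge0 => q _; rewrite mulr_ge0 ?invr_ge0 ?ler0n. Qed.

Lemma sens_eq0_cnt_eq0 t : sens t = 0 -> cnt t = 0.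
Proof.
move=> st; apply/eqP; rewrite eq_le cnt_ge0 andbT.
by rewrite -(mulr0 costG) -st cnt_le_costG_sens.
Qed.

Lemma Stot_neq0 : Stot != 0.
Proof. by rewrite Stot_card pnatr_eq0 -lt0n. Qed.

Lemma sum_prob : \sum_t prob t = 1.
Proof. by rewrite -mulr_suml mulfV // Stot_neq0. Qed.

Lemma natr_m_neq0 : m%:R != 0 :> R.
Proof. by rewrite pnatr_eq0 -lt0n. Qed.

Lemma prob_wgt_cnt t : prob t * (wgt t * cnt t) = cnt t / m%:R.
Proof.
have [st|st] := eqVneq (sens t) 0.
  by rewrite sens_eq0_cnt_eq0 // !(mulr0, mul0r).
by rewrite /wgt /prob; field; rewrite natr_m_neq0 st Stot_neq0.
Qed.

Lemma prob_wgt_cnt_sqr t :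
  prob t * (wgt t * cnt t) ^+ 2 <= #|Q|%:R / m%:R ^+ 2 * costG * cnt t.
Proof.
have [st|st] := eqVneq (sens t) 0.
  by rewrite sens_eq0_cnt_eq0 // !(mulr0, mul0r, expr0n).
have -> : prob t * (wgt t * cnt t) ^+ 2
          = #|Q|%:R / m%:R ^+ 2 * (cnt t / sens t) * cnt t.
  by rewrite /wgt /prob -Stot_card; field; rewrite natr_m_neq0 st Stot_neq0.
rewrite ler_wpM2r ?cnt_ge0 // ler_wpM2l ?divr_ge0 ?ler0n ?sqr_ge0 //.
by rewrite ler_pdivrMr ?lt0r ?st ?sens_ge0 // cnt_le_costG_sens.
Qed.

Lemma costC_sum_draws x : costC x = \sum_i wgt (x i) * cnt (x i).
Proof.
rewrite -(sum_draw_counts x (fun t => wgt t * cnt t)).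
by apply: eq_bigr => t _; rewrite mulrA.
Qed.

Lemma expect_costC : Expect costC = costG.
Proof.
rewrite /Expect /Pr; under eq_bigr do rewrite costC_sum_draws.
rewrite (expect_sum_draws m sum_prob (fun t => wgt t * cnt t)).
under eq_bigr do rewrite prob_wgt_cnt.
by rewrite -mulr_suml mulrCA mulfV ?mulr1 // natr_m_neq0.
Qed.

Lemma variance_costC : Variance costC <= #|Q|%:R / m%:R * costG ^+ 2.
Proof.
set g := fun t => wgt t * cnt t.
have costG_mean : costG = m%:R * \sum_t prob t * g t.
  under eq_bigr do rewrite prob_wgt_cnt.
  by rewrite -mulr_suml mulrCA mulfV ?mulr1 // natr_m_neq0.
rewrite /Variance expect_costC /Expect /Pr {1}costG_mean.
under eq_bigr do rewrite costC_sum_draws.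
rewrite (variance_sum_draws m sum_prob g).
apply: (@le_trans _ _ (m%:R * \sum_t prob t * g t ^+ 2)).
  by rewrite ler_wpM2l ?ler0n // gerBl sqr_ge0.
apply: (@le_trans _ _ (m%:R * \sum_t #|Q|%:R / m%:R ^+ 2 * costG * cnt t)).
  by rewrite ler_wpM2l ?ler0n //; apply: ler_sum => t _; apply: prob_wgt_cnt_sqr.
rewrite -mulr_sumr (_ : m%:R * _ = #|Q|%:R / m%:R * costG ^+ 2) //.
by rewrite /costG; field; rewrite natr_m_neq0.
Qed.

End CoresetSampling.

Theorem mainTheorem3 (R : realFieldType) (T Q : finType) (Tq : Q -> {set T})
    (m : nat) :
  (0 < #|Q|)%N ->
  (forall q : Q, Tq q != set0) ->
  (1 <= m)%N ->
  @Expect R T Q Tq m (@costC R T Q Tq m) = @costG R T Q Tq /\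
  @Variance R T Q Tq m (@costC R T Q Tq m)
    <= (#|Q|%:R / m%:R) * (@costG R T Q Tq) ^+ 2.
Proof.
move=> Q_gt0 Tq_neq0 m_gt0.
by split; [exact: expect_costC | exact: variance_costC].
Qed.
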